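(* Let $L\le\mathrm{Aff}(\mathbb{R}^n)$ be a subgroup whose centralizer in $\mathrm{Aff}(\mathbb{R}^n)$ acts transitively on an open subset $U\subseteq\mathbb{R}^n$. If $L$ preserves $U$, then the action of $L$ on $U$ is proper if and only if $L$ is a closed subgroup of $\mathrm{Aff}(\mathbb{R}^n)$.
   Context: $\mathrm{Aff}(\mathbb{R}^n)$ is the Lie group of affine transformations of $\mathbb{R}^n$. An action of a topological group $L$ on a locally compact Hausdorff space $X$ is proper if for every compact $K\subseteq X$ the set $\{\ell\in L\mid \ell K\cap K\neq\emptyset\}$ is compact. *)

From Stdlib Require Import Reals List.
From mathcomp Require Import ssreflect ssrfun ssrbool eqtype ssrnat fintype bigop.
Set Implicit Arguments. Unset Strict Implicit.
Open Scope R_scope.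

Definition Vec (n : nat) := 'I_n -> R.

Definition vzero (n : nat) : Vec n := fun _ => 0.
Definition ebasis (n : nat) (j : 'I_n) : Vec n :=
  fun i => if i == j then 1 else 0.

(* sup-norm distance on R^n (induces the Euclidean topology) *)
Definition distV (n : nat) (x y : Vec n) : R :=
  \big[Rmax/0]_(i < n) Rabs (x i - y i).

Definition is_affine_map (n : nat) (f : Vec n -> Vec n) : Prop :=
  exists (A : 'I_n -> 'I_n -> R) (b : Vec n),
    forall x i, f x i = \big[Rplus/0]_(j < n) (A i j * x j) + b i.

Definition Aff (n : nat) (f : Vec n -> Vec n) : Prop :=
  is_affine_map f /\ bijective f.

(* Distance on Aff(R^n): an affine map f is determined (linearly) by the
   points f 0, f e_1, ..., f e_n, i.e. by its coefficients (A, b); this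
   distance induces the usual Lie group topology of Aff(R^n) as a subset
   of R^(n*n) x R^n. *)
Definition distAff (n : nat) (f g : Vec n -> Vec n) : R :=
  Rmax (distV (f (@vzero n)) (g (@vzero n)))
       (\big[Rmax/0]_(j < n) distV (f (ebasis j)) (g (ebasis j))).

Definition open_for (T : Type) (d : T -> T -> R) (O : T -> Prop) : Prop :=
  forall x, O x -> exists eps, eps > 0 /\ forall y, d x y < eps -> O y.

Definition compact_for (T : Type) (d : T -> T -> R) (K : T -> Prop) : Prop :=
  forall (I : Type) (O : I -> T -> Prop),
    (forall i, open_for d (O i)) ->
    (forall x, K x -> exists i, O i x) ->
    exists l : list I, forall x, K x -> exists i, In i l /\ O i x.

Definition aff_subgroup (n : nat) (L : (Vec n -> Vec n) -> Prop) : Prop :=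
  (forall f, L f -> Aff f) /\
  L (fun x => x) /\
  (forall f g, L f -> L g -> L (fun x => f (g x))) /\
  (forall f g, L f -> cancel f g -> cancel g f -> L g).

Definition centralizer (n : nat) (L : (Vec n -> Vec n) -> Prop)
  (g : Vec n -> Vec n) : Prop :=
  Aff g /\ forall f, L f -> forall x, g (f x) = f (g x).

Definition preserves (n : nat) (G : (Vec n -> Vec n) -> Prop) (U : Vec n -> Prop) :=
  forall g x, G g -> U x -> U (g x).

Definition acts_transitively (n : nat) (G : (Vec n -> Vec n) -> Prop)
  (U : Vec n -> Prop) : Prop :=
  preserves G U /\ forall x y, U x -> U y -> exists g, G g /\ g x = y.

Definition closed_in_Aff (n : nat) (L : (Vec n -> Vec n) -> Prop) : Prop :=
  forall g, Aff g ->
    (forall eps, eps > 0 -> exists l, L l /\ distAff g l < eps) -> L g.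

Definition proper_action (n : nat) (L : (Vec n -> Vec n) -> Prop)
  (U : Vec n -> Prop) : Prop :=
  forall K : Vec n -> Prop,
    (forall x, K x -> U x) -> compact_for (@distV n) K ->
    compact_for (@distAff n) (fun l => L l /\ exists x, K x /\ K (l x)).

From HB Require Import structures.
From Stdlib Require Import Reals Lra List.
From Stdlib Require Import Classical ClassicalEpsilon FunctionalExtensionality.
From mathcomp Require Import ssreflect ssrfun ssrbool eqtype ssrnat fintype bigop.
Set Implicit Arguments. Unset Strict Implicit.
Open Scope R_scope.

(* Fix x0 in U and maps h_1, ..., h_n of the centralizer with h_j x0 = x0 + rho e_j
   (transitivity on the open set U).  Every l in L commutes with the h_j, so
   l (x0 + rho e_j) = h_j (l x0): l is the affine map [param (l x0)], which depends
   Lipschitz-continuously on the single point l x0.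

   Proper => closed: if l_k -> g, choose x0 in U with g x0 in U; all l_k send x0 into
   the compact set {x0} u {l_k x0} u {g x0} of U, so they lie in a compact subset of L,
   which must contain their limit g.

   Closed => proper: for maps of L sending a point of a compact K of U back into K, the
   points l x0 stay bounded, so these maps are uniformly Lipschitz.  If such maps send
   points near a to points near b, then l x0 is close to k_a b, where k_a is central with
   k_a a = x0; hence l is close to param (k_a b), an affine bijection (with inverse
   param (k_b a)) that lies in L by closedness.  Covering K x K by finitely many balls
   on which this holds gives a finite subcover. *)

HB.instance Definition _ := Monoid.isComLaw.Build R 0 Rplus
  (fun x y z => esym (Rplus_assoc x y z)) Rplus_comm Rplus_0_l.
HB.instance Definition _ := Monoid.isComLaw.Build R 1 Rmult
  (fun x y z => esym (Rmult_assoc x y z)) Rmult_comm Rmult_1_l.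
HB.instance Definition _ := Monoid.isMulLaw.Build R 0 Rmult Rmult_0_l Rmult_0_r.
HB.instance Definition _ :=
  Monoid.isAddLaw.Build R Rmult Rplus Rmult_plus_distr_r Rmult_plus_distr_l.
HB.instance Definition _ := SemiGroup.isComLaw.Build R Rmax Rmax_assoc Rmax_comm.

Lemma Rdiv_ge0 a b : 0 <= a -> 0 < b -> 0 <= a / b.
Proof.
by move=> a_ge0 b_gt0; apply: Rmult_le_pos a_ge0 (Rlt_le _ _ (Rinv_0_lt_compat _ b_gt0)).
Qed.

Lemma Rabs_mul_div_le a b r c e : 0 < r -> Rabs a <= c -> Rabs b <= e ->
  Rabs (a * b / r) <= c * e / r.
Proof.
move=> r_gt0 ac be; rewrite /Rdiv !Rabs_mult Rabs_inv (Rabs_pos_eq r); last lra.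
apply: Rmult_le_compat_r; first by apply: Rlt_le; apply: Rinv_0_lt_compat.
by apply: Rmult_le_compat => //; apply: Rabs_pos.
Qed.

Lemma exists_scale C e : 0 <= C -> 0 < e -> exists eta, 0 < eta /\ C * eta < e.
Proof.
move=> C_ge0 e_gt0; exists (e / (C + 1)); split; first by apply: Rdiv_lt_0_compat; lra.
have -> : C * (e / (C + 1)) = e - e / (C + 1) by field; lra.
have : 0 < e / (C + 1) by apply: Rdiv_lt_0_compat; lra.
lra.
Qed.

Lemma inv_succ_scaled_lt C e : 0 <= C -> 0 < e ->
  exists N, forall k, (N <= k)%N -> C * / (INR k + 1) < e.
Proof.
move=> C_ge0 e_gt0; have [N HN] := INR_archimed e (C + 1) e_gt0.
exists N => k /leP Nk; have := le_INR _ _ Nk; have := pos_INR N => N_ge0 NK.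
have k1_gt0 : 0 < INR k + 1 by lra.
apply: (Rmult_lt_reg_r (INR k + 1)) => //.
rewrite Rmult_assoc Rinv_l; nra.
Qed.

Section BigR.
Variable n : nat.
Implicit Types F G : 'I_n -> R.

Lemma le_bigRmax F i : F i <= \big[Rmax/0]_(j < n) F j.
Proof. rewrite (bigD1 i) //=; exact: Rmax_l. Qed.

Lemma bigRmax_le F c : 0 <= c -> (forall j, F j <= c) -> \big[Rmax/0]_(j < n) F j <= c.
Proof. by move=> c_ge0 Fc; apply: (big_ind (Rle^~ c)) => // x y; apply: Rmax_lub. Qed.

Lemma bigRmax_ge0 F : 0 <= \big[Rmax/0]_(j < n) F j.
Proof.
apply: (big_rec (fun x => 0 <= x)) => [|i x _ x_ge0]; first lra.
exact: Rle_trans x_ge0 (Rmax_r _ _).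
Qed.

Lemma bigRplus_le F G : (forall j, F j <= G j) ->
  \big[Rplus/0]_(j < n) F j <= \big[Rplus/0]_(j < n) G j.
Proof. by move=> FG; apply: (big_ind2 Rle) => [|? ? ? ?|j _]; [lra|lra|]. Qed.

Lemma Rabs_bigRplus F :
  Rabs (\big[Rplus/0]_(j < n) F j) <= \big[Rplus/0]_(j < n) Rabs (F j).
Proof.
apply: (big_ind2 (fun x y => Rabs x <= y)) => [|x1 x2 y1 y2 ? ?|j _].
- rewrite Rabs_R0; lra.
- apply: Rle_trans (Rabs_triang _ _) _; lra.
- lra.
Qed.

Lemma bigRplus_sub F G :
  \big[Rplus/0]_(j < n) F j - \big[Rplus/0]_(j < n) G j =
  \big[Rplus/0]_(j < n) (F j - G j).
Proof.
have -> : \big[Rplus/0]_(j < n) F j =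
          \big[Rplus/0]_(j < n) (F j - G j) + \big[Rplus/0]_(j < n) G j.
  by rewrite -big_split; apply: eq_bigr => j _ /=; ring.
ring.
Qed.

Lemma bigRplus_le_const F c :
  (forall j, F j <= c) -> \big[Rplus/0]_(j < n) F j <= INR n * c.
Proof.
move=> Fc; apply: Rle_trans (bigRplus_le (G := fun=> c) Fc) _.
rewrite big_const_ord; elim: n => [|m IHm]; first by rewrite /=; lra.
rewrite iterS S_INR; lra.
Qed.

Lemma bigRplus_ebasis F k : \big[Rplus/0]_(j < n) (F j * ebasis k j) = F k.
Proof.
rewrite (bigD1 k) //= /ebasis eqxx big1 => [|j /negPf ->]; ring.
Qed.

End BigR.

Section DistV.
Variable n : nat.
Implicit Types x y z : Vec n.

Lemma distV_ge x y i : Rabs (x i - y i) <= distV x y.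
Proof. exact: (le_bigRmax (fun i => Rabs (x i - y i))). Qed.

Lemma distV_le x y c : 0 <= c -> (forall i, Rabs (x i - y i) <= c) -> distV x y <= c.
Proof. exact: bigRmax_le. Qed.

Lemma distV_ge0 x y : 0 <= distV x y.
Proof. exact: bigRmax_ge0. Qed.

Lemma distV_sym x y : distV x y = distV y x.
Proof. by rewrite /distV; apply: eq_bigr => i _; rewrite Rabs_minus_sym. Qed.

Lemma distV_triangle x y z : distV x z <= distV x y + distV y z.
Proof.
apply: distV_le => [|i]; first by have := distV_ge0 x y; have := distV_ge0 y z; lra.
have -> : x i - z i = (x i - y i) + (y i - z i) by ring.
apply: Rle_trans (Rabs_triang _ _) _.
by have := distV_ge x y i; have := distV_ge y z i; lra.
Qed.

Lemma distV_refl x : distV x x = 0.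
Proof.
apply: Rle_antisym (distV_ge0 _ _); apply: distV_le => [|i]; first lra.
rewrite Rminus_diag Rabs_R0; lra.
Qed.

Lemma distV_le0 x y : distV x y <= 0 -> x = y.
Proof.
move=> xy_le0; apply: functional_extensionality => i.
have := distV_ge x y i; have := Rabs_pos (x i - y i).
by case: (Rcase_abs (x i - y i)) => xy; [rewrite Rabs_left | rewrite Rabs_right]; lra.
Qed.

Lemma distV_ebasis j : distV (ebasis j) (@vzero n) <= 1.
Proof.
apply: distV_le => [|i]; first lra.
by rewrite /ebasis /vzero; case: (i == j); rewrite ?Rminus_0_r ?Rabs_R1 ?Rabs_R0; lra.
Qed.

End DistV.

Lemma eq_of_scaled_bound n (x y : Vec n) C : 0 <= C ->
  (forall eta, 0 < eta -> distV x y <= C * eta) -> x = y.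
Proof.
move=> C_ge0 bound; apply: distV_le0; apply: Rnot_lt_le => xy_gt0.
have [eta [eta_gt0 Ceta]] := exists_scale C_ge0 xy_gt0.
by have := bound eta eta_gt0; lra.
Qed.

Section DistAff.
Variable n : nat.
Implicit Types f g h : Vec n -> Vec n.

Lemma distAff_vzero f g : distV (f (@vzero n)) (g (@vzero n)) <= distAff f g.
Proof. exact: Rmax_l. Qed.

Lemma distAff_ebasis f g j : distV (f (ebasis j)) (g (ebasis j)) <= distAff f g.
Proof.
apply: Rle_trans (Rmax_r _ _).
exact: (le_bigRmax (fun j => distV (f (ebasis j)) (g (ebasis j)))).
Qed.

Lemma distAff_ge0 f g : 0 <= distAff f g.
Proof. exact: Rle_trans (distV_ge0 _ _) (distAff_vzero f g). Qed.

Lemma distAff_le f g c : 0 <= c -> distV (f (@vzero n)) (g (@vzero n)) <= c ->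
  (forall j, distV (f (ebasis j)) (g (ebasis j)) <= c) -> distAff f g <= c.
Proof. by move=> c_ge0 f0 fe; apply: Rmax_lub => //; apply: bigRmax_le. Qed.

Lemma distAff_sym f g : distAff f g = distAff g f.
Proof.
by rewrite /distAff distV_sym; congr Rmax; apply: eq_bigr => j _; rewrite distV_sym.
Qed.

Lemma distAff_triangle f g h : distAff f h <= distAff f g + distAff g h.
Proof.
apply: distAff_le => [|| j].
- by have := distAff_ge0 f g; have := distAff_ge0 g h; lra.
- apply: Rle_trans (distV_triangle _ (g (@vzero n)) _) _.
  by have := distAff_vzero f g; have := distAff_vzero g h; lra.
- apply: Rle_trans (distV_triangle _ (g (ebasis j)) _) _.
  by have := distAff_ebasis f g j; have := distAff_ebasis g h j; lra.
Qed.

Lemma distAff_refl f : distAff f f = 0.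
Proof.
apply: Rle_antisym (distAff_ge0 _ _).
by apply: distAff_le => [|| j]; rewrite ?distV_refl; lra.
Qed.

End DistAff.

Lemma list_choice (X I : Type) (s : list X) (Q : X -> I -> Prop) :
  (forall p, In p s -> exists i, Q p i) ->
  exists li : list I, forall p, In p s -> exists i, In i li /\ Q p i.
Proof.
elim: s => [|a s IHs] Hs; first by exists nil.
have [i Qai] := Hs a (or_introl erefl).
have [li Hli] := IHs (fun p sp => Hs p (or_intror sp)).
exists (i :: li) => p [<-|sp]; first by exists i; split; [left|].
by have [j [lij Qpj]] := Hli p sp; exists j; split; [right|].
Qed.

Lemma list_pos_lower_bound (X : Type) (s : list X) (f : X -> R) :
  (forall p, In p s -> 0 < f p) -> exists e, 0 < e /\ forall p, In p s -> e <= f p.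
Proof.
elim: s => [|a s IHs] Hs; first by exists 1; split => //; lra.
have [e [e_gt0 He]] := IHs (fun p sp => Hs p (or_intror sp)).
exists (Rmin e (f a)); split; first exact: Rmin_pos (Hs a (or_introl erefl)).
by move=> p [<-|sp]; [apply: Rmin_r | apply: Rle_trans (Rmin_l _ _) (He p sp)].
Qed.

Lemma list_upper_bound (X : Type) (s : list X) (f : X -> R) :
  exists M, forall p, In p s -> f p <= M.
Proof.
elim: s => [|a s [M HM]]; first by exists 0.
exists (Rmax (f a) M) => p [<-|sp]; first exact: Rmax_l.
exact: Rle_trans (HM p sp) (Rmax_r _ _).
Qed.

Section PseudoMetric.
Variables (T : Type) (d : T -> T -> R).
Hypothesis d_refl : forall x, d x x = 0.
Hypothesis d_sym : forall x y, d x y = d y x.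
Hypothesis d_triangle : forall x y z, d x z <= d x y + d y z.

Lemma ball_open a r : open_for d (fun y => d a y < r).
Proof.
move=> x dax; exists (r - d a x); split; first lra.
by move=> y dxy; have := d_triangle a x y; lra.
Qed.

Lemma compact_cover_balls (K : T -> Prop) (P : T -> R -> Prop) :
  compact_for d K -> (forall a, K a -> exists r, 0 < r /\ P a r) ->
  exists s : list (T * R), (forall p, In p s -> 0 < p.2 /\ P p.1 p.2) /\
    forall x, K x -> exists p, In p s /\ d p.1 x < p.2.
Proof.
move=> cK HP.
pose ball (p : {p : T * R | 0 < p.2 /\ P p.1 p.2}) x := d (sval p).1 x < (sval p).2.
have center : forall x, K x -> exists p, ball p x.
  move=> x Kx; have [r Pxr] := HP x Kx.
  by exists (exist _ (x, r) Pxr); rewrite /ball /= d_refl; case: Pxr.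
have [s Hs] := cK _ ball (fun p => @ball_open _ _) center.
exists (map sval s); split.
  by move=> p /in_map_iff [q [<- _]]; exact: (svalP q).
move=> x Kx; have [q [sq dqx]] := Hs x Kx.
by exists (sval q); split => //; apply: in_map.
Qed.

Lemma compact_bounded (K : T -> Prop) p : compact_for d K ->
  exists M, forall y, K y -> d p y <= M.
Proof.
move=> cK.
have [s [_ cover]] := compact_cover_balls (P := fun _ r => r = 1) cK
  (fun a _ => ex_intro _ 1 (conj Rlt_0_1 erefl)).
have [M HM] := list_upper_bound s (fun a => d p a.1 + a.2).
exists M => y Ky; have [a [sa day]] := cover y Ky.
by have := HM a sa; have := d_triangle p a.1 y; lra.
Qed.

Lemma compact_closed (K : T -> Prop) p : compact_for d K ->
  (forall eps, 0 < eps -> exists k, K k /\ d k p < eps) -> exists k, K k /\ d k p = 0.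
Proof.
move=> cK adh; apply: NNPP => no_k.
have dp_gt0 k : K k -> 0 < d k p.
  move=> Kk; have := d_triangle k p k; rewrite d_refl (d_sym p k).
  by case=> [|dkp0]; [lra | exfalso; apply: no_k; exists k; split => //; lra].
have /(compact_cover_balls (P := fun k r => r = d k p / 2) cK) [s [Hs cover]] :
    forall k, K k -> exists r, 0 < r /\ r = d k p / 2.
  move=> k Kk; exists (d k p / 2); split => //; have := dp_gt0 k Kk; lra.
have [e [e_gt0 He]] := list_pos_lower_bound (fun a sa => (Hs a sa).1).
have [k [Kk dkp]] := adh e e_gt0.
have [a [sa dak]] := cover k Kk.
by have := He a sa; have := d_triangle a.1 k p; have := (Hs a sa).2; lra.
Qed.

Lemma compact_cvg_seq (z : nat -> T) zs :
  (forall eps, 0 < eps -> exists N, forall k, (N <= k)%N -> d zs (z k) < eps) ->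
  compact_for d (fun y => y = zs \/ exists k, y = z k).
Proof.
move=> cvg I O O_open cover.
have [i0 O_zs] := cover zs (or_introl erefl).
have [e [e_gt0 ball_i0]] := O_open i0 zs O_zs.
have [N HN] := cvg e e_gt0.
have [li Hli] := list_choice (s := List.seq 0 N) (Q := fun k i => O i (z k))
  (fun k _ => cover (z k) (or_intror (ex_intro _ k erefl))).
exists (i0 :: li) => _ [->|[k ->]]; first by exists i0; split; [left|].
case: (leqP N k) => [Nk|kN].
  by exists i0; split; [left | apply: ball_i0; apply: HN].
have [i [lii Oi]] := Hli k (proj2 (in_seq N 0 k) (conj (Nat.le_0_l k) (ltP kN))).
by exists i; split; [right|].
Qed.

End PseudoMetric.

Section Product.
Variables (X Y : Type) (dX : X -> X -> R) (dY : Y -> Y -> R).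
Hypotheses (dX_refl : forall x, dX x x = 0) (dY_refl : forall y, dY y y = 0).
Hypothesis dX_triangle : forall x y z, dX x z <= dX x y + dX y z.
Hypothesis dY_triangle : forall x y z, dY x z <= dY x y + dY y z.

Definition dist_prod (p q : X * Y) := Rmax (dX p.1 q.1) (dY p.2 q.2).

Lemma dist_prod_refl p : dist_prod p p = 0.
Proof. by rewrite /dist_prod dX_refl dY_refl Rmax_left //; lra. Qed.

Lemma dist_prod_triangle p q r : dist_prod p r <= dist_prod p q + dist_prod q r.
Proof.
apply: Rmax_lub.
- apply: Rle_trans (dX_triangle _ q.1 _) _; apply: Rplus_le_compat; exact: Rmax_l.
- apply: Rle_trans (dY_triangle _ q.2 _) _; apply: Rplus_le_compat; exact: Rmax_r.
Qed.

Lemma compact_prod (A : X -> Prop) (B : Y -> Prop) :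
  compact_for dX A -> compact_for dY B -> compact_for dist_prod (fun p => A p.1 /\ B p.2).
Proof.
move=> cA cB I O O_open cover.
have tube a : A a -> exists r, 0 < r /\ exists li : list I,
    forall x y, dX a x < r -> B y -> exists i, In i li /\ O i (x, y).
  move=> Aa.
  have /(compact_cover_balls dY_refl dY_triangle cB) [s [Hs coverB]] :
      forall b, B b -> exists r, 0 < r /\
        exists i, forall q, dist_prod (a, b) q < 2 * r -> O i q.
    move=> b Bb; have [i Oi] := cover (a, b) (conj Aa Bb).
    have [e [e_gt0 ball_e]] := O_open i _ Oi.
    exists (e / 2); split; first lra.
    by exists i => q; rewrite (_ : 2 * (e / 2) = e); [exact: ball_e | field].
  have [r [r_gt0 r_le]] := list_pos_lower_bound (fun p sp => (Hs p sp).1).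
  have [li Hli] := list_choice (fun p sp => (Hs p sp).2).
  exists r; split => //; exists li => x y dax By.
  have [p [sp dpy]] := coverB y By; have [i [lii Oi]] := Hli p sp.
  exists i; split => //; apply: Oi; rewrite /dist_prod /=.
  by apply: Rmax_lub_lt; have := r_le p sp; lra.
have [s [Hs coverA]] := compact_cover_balls dX_refl dX_triangle cA tube.
have [lli Hlli] := list_choice (fun p sp => (Hs p sp).2).
exists (concat lli) => [[x y] [Ax By]].
have [p [sp dpx]] := coverA x Ax; have [li [llii Hli]] := Hlli p sp.
have [i [lii Oi]] := Hli x y dpx By.
by exists i; split => //; apply/in_concat; exists li.
Qed.

End Product.

Section Affine.
Variable n : nat.
Implicit Types f g : Vec n -> Vec n.

Definition aff_col f (j : 'I_n) : Vec n := fun i => f (ebasis j) i - f (@vzero n) i.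

Definition lip_const f :=
  INR n * \big[Rmax/0]_(j < n) distV (f (ebasis j)) (f (@vzero n)).

Lemma lip_const_ge0 f : 0 <= lip_const f.
Proof. exact: Rmult_le_pos (pos_INR n) (bigRmax_ge0 _). Qed.

Lemma affine_coordE f : is_affine_map f -> forall x i,
  f x i = \big[Rplus/0]_(j < n) (aff_col f j i * x j) + f (@vzero n) i.
Proof.
move=> [A [b fE]] x i.
have f0 : f (@vzero n) i = b i.
  by rewrite fE big1 => [|j _]; rewrite /vzero; ring.
have colE j : aff_col f j i = A i j by rewrite /aff_col f0 fE bigRplus_ebasis; ring.
by rewrite fE f0; congr (_ + _); apply: eq_bigr => j _; rewrite colE.
Qed.

Lemma affine_sub f : is_affine_map f -> forall x y i,
  f x i - f y i = \big[Rplus/0]_(j < n) (aff_col f j i * (x j - y j)).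
Proof.
move=> fA x y i; rewrite (affine_coordE fA x) (affine_coordE fA y).
rewrite (_ : forall a b c, a + c - (b + c) = a - b) => [|a b c]; last ring.
by rewrite bigRplus_sub; apply: eq_bigr => j _; ring.
Qed.

Lemma affine_lip f : is_affine_map f ->
  forall x y, distV (f x) (f y) <= lip_const f * distV x y.
Proof.
move=> fA x y; apply: distV_le => [|i].
  exact: Rmult_le_pos (lip_const_ge0 f) (distV_ge0 x y).
rewrite (affine_sub fA); apply: Rle_trans (Rabs_bigRplus _) _.
rewrite /lip_const Rmult_assoc; apply: bigRplus_le_const => j.
rewrite Rabs_mult; apply: Rmult_le_compat; try exact: Rabs_pos; last exact: distV_ge.
apply: Rle_trans (distV_ge _ _ i) _.
exact: (le_bigRmax (fun j => distV (f (ebasis j)) (f (@vzero n)))).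
Qed.

Lemma affine_distV_le f g : is_affine_map f -> is_affine_map g -> forall x,
  distV (f x) (g x) <= distAff f g * (1 + 2 * INR n * distV x (@vzero n)).
Proof.
move=> fA gA x; have d_ge0 := distAff_ge0 f g; have x_ge0 := distV_ge0 x (@vzero n).
have n_ge0 := pos_INR n.
apply: distV_le => [|i]; first by apply: Rmult_le_pos => //; nra.
have d0 : Rabs (f (@vzero n) i - g (@vzero n) i) <= distAff f g.
  exact: Rle_trans (distV_ge _ _ i) (distAff_vzero _ _).
rewrite (affine_coordE fA x) (affine_coordE gA x).
rewrite (_ : forall a b c e, a + c - (b + e) = (a - b) + (c - e)) => [|a b c e]; last ring.
rewrite bigRplus_sub; apply: Rle_trans (Rabs_triang _ _) _.
suff : Rabs (\big[Rplus/0]_(j < n) (aff_col f j i * x j - aff_col g j i * x j)) <=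
       INR n * (2 * distAff f g * distV x (@vzero n)) by nra.
apply: Rle_trans (Rabs_bigRplus _) _; apply: bigRplus_le_const => j.
rewrite -Rmult_minus_distr_r Rabs_mult; apply: Rmult_le_compat; try exact: Rabs_pos.
- rewrite /aff_col.
  rewrite (_ : forall a b c e, a - c - (b - e) = (a - b) + - (c - e))
    => [|a b c e]; last ring.
  apply: Rle_trans (Rabs_triang _ _) _; rewrite Rabs_Ropp.
  have := Rle_trans _ _ _ (distV_ge _ _ i) (distAff_ebasis f g j); lra.
- by have := distV_ge x (@vzero n) j; rewrite /vzero Rminus_0_r.
Qed.

Lemma affine_distAff_eq0 f g : is_affine_map f -> is_affine_map g ->
  distAff f g = 0 -> f = g.
Proof.
move=> fA gA fg0; apply: functional_extensionality => x; apply: distV_le0.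
by have := affine_distV_le fA gA x; rewrite fg0 Rmult_0_l.
Qed.

Lemma affine_inv f g : is_affine_map f -> cancel f g -> cancel g f -> is_affine_map g.
Proof.
move=> fA fK gK; exists (fun i j => aff_col g j i), (g (@vzero n)) => y i.
pose v : Vec n := fun k => \big[Rplus/0]_(j < n) (aff_col g j k * y j) + g (@vzero n) k.
suff fv : f v = y by rewrite -{1}fv fK.
apply: functional_extensionality => m.
have -> : f v m = f v m - f (g (@vzero n)) m by rewrite gK /vzero; ring.
rewrite affine_sub // (eq_bigr (fun k =>
  \big[Rplus/0]_(j < n) (aff_col f k m * (aff_col g j k * y j)))); last first.
  by move=> k _; rewrite -big_distrr /v /=; congr (_ * _); ring.
rewrite exchange_big -[RHS](bigRplus_ebasis y) /=; apply: eq_bigr => j _.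
have -> : ebasis m j = f (g (ebasis j)) m - f (g (@vzero n)) m.
  by rewrite !gK /ebasis /vzero eq_sym; ring.
rewrite affine_sub // big_distrr /=; apply: eq_bigr => k _; rewrite /aff_col; ring.
Qed.

End Affine.

Section ProperToClosed.
Variables (n : nat) (L : (Vec n -> Vec n) -> Prop) (U : Vec n -> Prop).
Hypothesis L_affine : forall l, L l -> is_affine_map l.
Hypothesis L_preserves : preserves L U.
Hypothesis L_proper : proper_action L U.

Lemma mem_of_proper_limit g x0 : is_affine_map g -> U x0 -> U (g x0) ->
  (forall eps, eps > 0 -> exists l, L l /\ distAff g l < eps) -> L g.
Proof.
move=> gA Ux0 Ugx0 g_adh.
have [lk lk_spec] : exists lk : nat -> Vec n -> Vec n,
    forall k, L (lk k) /\ distAff g (lk k) < / (INR k + 1).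
  apply: (choice (fun k l => L l /\ distAff g l < / (INR k + 1))) => k.
  by apply: g_adh; apply: Rinv_0_lt_compat; have := pos_INR k; lra.
have lk_cvg C eps : 0 <= C -> 0 < eps ->
    exists N, forall k, (N <= k)%N -> C * distAff g (lk k) < eps.
  move=> C_ge0 eps_gt0; have [N HN] := inv_succ_scaled_lt C_ge0 eps_gt0.
  exists N => k Nk; apply: Rle_lt_trans (HN k Nk).
  by apply: Rmult_le_compat_l => //; apply: Rlt_le; case: (lk_spec k).
pose p k := if k is k'.+1 then lk k' x0 else x0.
pose K y := y = g x0 \/ exists k, y = p k.
have K_compact : compact_for (@distV n) K.
  apply: compact_cvg_seq => eps eps_gt0.
  have c_ge0 : 0 <= 1 + 2 * INR n * distV x0 (@vzero n).
    by have := pos_INR n; have := distV_ge0 x0 (@vzero n); nra.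
  have [N HN] := lk_cvg _ _ c_ge0 eps_gt0.
  exists N.+1 => [[|k]] // Nk; apply: Rle_lt_trans (HN k Nk).
  by rewrite Rmult_comm; apply: affine_distV_le => //; apply: L_affine; case: (lk_spec k).
have KU y : K y -> U y.
  by move=> [->|[[|k] ->]] //; apply: L_preserves => //; case: (lk_spec k).
have lk_returns k : L (lk k) /\ exists x, K x /\ K (lk k x).
  by split; [case: (lk_spec k) | exists x0; split; right; [exists 0%N | exists k.+1]].
have /(compact_closed (@distAff_refl n) (@distAff_sym n) (@distAff_triangle n)
      (L_proper KU K_compact)) [s [[Ls _] sg0]] :
    forall eps, 0 < eps -> exists l, (L l /\ exists x, K x /\ K (l x)) /\ distAff l g < eps.
  move=> eps eps_gt0; have [N HN] := lk_cvg 1 eps Rle_0_1 eps_gt0.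
  exists (lk N); split; first exact: lk_returns.
  by rewrite distAff_sym; have := HN N (leqnn N); lra.
by rewrite -(affine_distAff_eq0 (L_affine Ls) gA sg0).
Qed.

Lemma exists_point_mapped_into g u : Aff g -> open_for (@distV n) U -> U u ->
  (forall eps, eps > 0 -> exists l, L l /\ distAff g l < eps) ->
  exists x0, U x0 /\ U (g x0).
Proof.
move=> [gA [g' gK g'K]] U_open Uu g_adh.
have g'A := affine_inv gA gK g'K.
have [r [r_gt0 ball_u]] := U_open u Uu.
pose lam := lip_const g'.
pose c := 1 + 2 * INR n * distV u (@vzero n).
have lam_ge0 : 0 <= lam := lip_const_ge0 g'.
have c_ge1 : 1 <= c by have := pos_INR n; have := distV_ge0 u (@vzero n); rewrite /c; nra.
have [l [Ll gl]] : exists l, L l /\ distAff g l < r / ((lam + 1) * c).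
  by apply: g_adh; apply: Rdiv_lt_0_compat => //; nra.
exists (g' (l u)); rewrite g'K; split; last exact: L_preserves.
apply: ball_u; rewrite -{1}(gK u); apply: Rle_lt_trans (affine_lip g'A _ _) _.
have gul : distV (g u) (l u) < r / (lam + 1).
  apply: Rle_lt_trans (affine_distV_le gA (L_affine Ll) u) _; rewrite -/c.
  have -> : r / (lam + 1) = r / ((lam + 1) * c) * c by field; lra.
  by apply: Rmult_lt_compat_r => //; lra.
apply: Rle_lt_trans (Rmult_le_compat_l _ _ _ lam_ge0 (Rlt_le _ _ gul)) _.
have -> : lam * (r / (lam + 1)) = r - r / (lam + 1) by field; lra.
have : 0 < r / (lam + 1) by apply: Rdiv_lt_0_compat; lra.
lra.
Qed.

Lemma closed_of_proper u : open_for (@distV n) U -> U u -> closed_in_Aff L.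
Proof.
move=> U_open Uu g gAff g_adh.
have [x0 [Ux0 Ugx0]] := exists_point_mapped_into gAff U_open Uu g_adh.
exact: mem_of_proper_limit gAff.1 Ux0 Ugx0 g_adh.
Qed.

End ProperToClosed.

Section Parametrization.
Variables (n : nat) (L : (Vec n -> Vec n) -> Prop).
Hypothesis L_affine : forall l, L l -> is_affine_map l.
Variables (x0 : Vec n) (rho : R) (h : 'I_n -> Vec n -> Vec n).
Hypothesis rho_gt0 : 0 < rho.
Hypothesis h_central : forall j, centralizer L (h j).
Hypothesis h_x0 : forall j i, h j x0 i = x0 i + rho * ebasis j i.

Definition param (z : Vec n) : Vec n -> Vec n :=
  fun u i => z i + \big[Rplus/0]_(j < n) ((u j - x0 j) * (h j z i - z i) / rho).

Lemma param_of_mem l : L l -> l = param (l x0).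
Proof.
move=> Ll; have lA := L_affine Ll.
apply: functional_extensionality => u; apply: functional_extensionality => i.
have colE j : aff_col l j i = (h j (l x0) i - l x0 i) / rho.
  rewrite (proj2 (h_central j) l Ll x0) (affine_sub lA).
  rewrite (eq_bigr (fun k => aff_col l k i * rho * ebasis j k)) => [|k _].
    by rewrite bigRplus_ebasis; field; lra.
  by rewrite h_x0; ring.
have -> : l u i = l x0 i + (l u i - l x0 i) by ring.
rewrite (affine_sub lA); congr (_ + _); apply: eq_bigr => j _.
by rewrite colE; field; lra.
Qed.

Lemma param_affine z : is_affine_map (param z).
Proof.
exists (fun i j => (h j z i - z i) / rho),
  (fun i => z i - \big[Rplus/0]_(j < n) (x0 j * (h j z i - z i) / rho)) => u i.
rewrite /param (_ : \big[Rplus/0]_(j < n) _ =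
  \big[Rplus/0]_(j < n) ((h j z i - z i) / rho * u j) -
  \big[Rplus/0]_(j < n) (x0 j * (h j z i - z i) / rho)); first ring.
by rewrite bigRplus_sub; apply: eq_bigr => j _; field; lra.
Qed.

Definition hlip := \big[Rmax/0]_(j < n) lip_const (h j).

Lemma hlip_ge0 : 0 <= hlip.
Proof. exact: bigRmax_ge0. Qed.

Lemma h_lip j x y : distV (h j x) (h j y) <= hlip * distV x y.
Proof.
apply: Rle_trans (affine_lip (proj1 (proj1 (h_central j))) x y) _.
apply: Rmult_le_compat_r; first exact: distV_ge0.
exact: (le_bigRmax (fun j => lip_const (h j))).
Qed.

Lemma dist_h_le j z : distV (h j z) z <= (hlip + 1) * distV z x0 + rho.
Proof.
have hx0 : distV (h j x0) x0 <= rho.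
  apply: distV_le => [|i]; first lra.
  rewrite h_x0 (_ : forall a b, a + b - a = b) => [|a b]; last ring.
  rewrite Rabs_mult Rabs_pos_eq; last lra.
  by rewrite /ebasis; case: (i == j); rewrite ?Rabs_R1 ?Rabs_R0; lra.
apply: Rle_trans (distV_triangle _ (h j x0) _) _.
apply: Rle_trans (Rplus_le_compat_l _ _ _ (distV_triangle _ x0 _)) _.
by have := h_lip j z x0; rewrite (distV_sym x0 z); lra.
Qed.

Definition orbit_lip D := INR n * (((hlip + 1) * D + rho) / rho).

Lemma orbit_lip_le D D' : 0 <= D -> D <= D' -> orbit_lip D <= orbit_lip D'.
Proof.
move=> D_ge0 DD'; apply: Rmult_le_compat_l; first exact: pos_INR.
apply: Rmult_le_compat_r; first by apply: Rlt_le; apply: Rinv_0_lt_compat.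
by have := hlip_ge0; nra.
Qed.

Lemma orbit_lip_ge0 D : 0 <= D -> 0 <= orbit_lip D.
Proof.
move=> D_ge0; apply: Rmult_le_pos (pos_INR _) (Rdiv_ge0 _ rho_gt0).
by have := hlip_ge0; nra.
Qed.

Lemma param_lip z u v :
  distV (param z u) (param z v) <= orbit_lip (distV z x0) * distV u v.
Proof.
have D_ge0 := distV_ge0 z x0; have := hlip_ge0 => hlip_ge0.
apply: distV_le => [|i].
  apply: Rmult_le_pos (distV_ge0 _ _); apply: Rmult_le_pos (pos_INR _) _.
  by apply: Rdiv_ge0 => //; nra.
rewrite /param (_ : forall c a b, c + a - (c + b) = a - b) => [|c a b]; last ring.
rewrite bigRplus_sub; apply: Rle_trans (Rabs_bigRplus _) _.
rewrite /orbit_lip Rmult_assoc; apply: bigRplus_le_const => j.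
rewrite (_ : forall a b c e, (a - e) * c / rho - (b - e) * c / rho = (a - b) * c / rho)
  => [|a b c e]; last by field; lra.
apply: Rle_trans (Rabs_mul_div_le rho_gt0 (distV_ge u v j) _) _.
  exact: Rle_trans (distV_ge _ _ i) (dist_h_le j z).
by apply: Req_le; field; lra.
Qed.

Definition param_cont_const r := 1 + INR n * (r / rho * (hlip + 1)).

Lemma param_cont_const_ge1 r : 0 <= r -> 1 <= param_cont_const r.
Proof.
move=> r_ge0; suff : 0 <= INR n * (r / rho * (hlip + 1)) by rewrite /param_cont_const; lra.
apply: Rmult_le_pos (pos_INR _) (Rmult_le_pos _ _ _ _); last by have := hlip_ge0; lra.
exact: Rdiv_ge0.
Qed.

Lemma param_cont_const_le r r' : r <= r' -> param_cont_const r <= param_cont_const r'.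
Proof.
move=> rr'; apply: Rplus_le_compat_l; apply: Rmult_le_compat_l; first exact: pos_INR.
apply: Rmult_le_compat_r; first by have := hlip_ge0; lra.
by apply: Rmult_le_compat_r => //; apply: Rlt_le; apply: Rinv_0_lt_compat.
Qed.

Lemma param_cont z z' u :
  distV (param z u) (param z' u) <= param_cont_const (distV u x0) * distV z z'.
Proof.
have d_ge0 := distV_ge0 z z'; have := hlip_ge0 => hlip_ge0.
have c_ge1 := param_cont_const_ge1 (distV_ge0 u x0).
apply: distV_le => [|i]; first nra.
rewrite /param (_ : forall a b c e, a + b - (c + e) = (a - c) + (b - e))
  => [|a b c e]; last ring.
rewrite bigRplus_sub; apply: Rle_trans (Rabs_triang _ _) _.
rewrite /param_cont_const Rmult_plus_distr_r Rmult_1_l.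
apply: Rplus_le_compat; first exact: distV_ge.
rewrite !Rmult_assoc; apply: Rle_trans (Rabs_bigRplus _) _.
apply: bigRplus_le_const => j.
rewrite (_ : forall a b c, a * b / rho - a * c / rho = a * (b - c) / rho)
  => [|a b c]; last by field; lra.
apply: Rle_trans (Rabs_mul_div_le rho_gt0 (distV_ge u x0 j) _) _.
  rewrite (_ : forall a b c e, a - b - (c - e) = (a - c) + - (b - e))
    => [|a b c e]; last ring.
  apply: Rle_trans (Rabs_triang _ _) _; rewrite Rabs_Ropp.
  apply: Rplus_le_compat (Rle_trans _ _ _ (distV_ge _ _ i) (h_lip j z z')) (distV_ge _ _ i).
by apply: Req_le; field; lra.
Qed.

Lemma param_distAff z z' :
  distAff (param z) (param z') <= param_cont_const (1 + distV (@vzero n) x0) * distV z z'.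
Proof.
have near_u u : distV u x0 <= 1 + distV (@vzero n) x0 ->
    distV (param z u) (param z' u) <=
    param_cont_const (1 + distV (@vzero n) x0) * distV z z'.
  move=> ux0; apply: Rle_trans (param_cont z z' u) _.
  exact: Rmult_le_compat_r (distV_ge0 _ _) (param_cont_const_le ux0).
have c_ge1 : 1 <= param_cont_const (1 + distV (@vzero n) x0).
  by apply: param_cont_const_ge1; have := distV_ge0 (@vzero n) x0; lra.
apply: distAff_le => [|| j]; first by have := distV_ge0 z z'; nra.
  by apply: near_u; lra.
apply: near_u; apply: Rle_trans (distV_triangle _ (@vzero n) _) _.
by have := distV_ebasis j; lra.
Qed.

Lemma mem_lip l u v : L l ->
  distV (l u) (l v) <= orbit_lip (distV (l x0) x0) * distV u v.
Proof. by move=> Ll; rewrite {1 2}(param_of_mem Ll); exact: param_lip. Qed.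

Lemma param_mem_distV l z u : L l ->
  distV (param z u) (l u) <= param_cont_const (distV u x0) * distV z (l x0).
Proof. by move=> Ll; rewrite {1}(param_of_mem Ll); exact: param_cont. Qed.

Lemma param_mem_distAff l z : L l ->
  distAff (param z) l <= param_cont_const (1 + distV (@vzero n) x0) * distV z (l x0).
Proof. by move=> Ll; rewrite {1}(param_of_mem Ll); exact: param_distAff. Qed.

Section ClosedToProper.
Hypothesis L_bijective : forall l, L l -> bijective l.
Hypothesis L_inv : forall f g, L f -> cancel f g -> cancel g f -> L g.
Hypothesis L_closed : closed_in_Aff L.
Variable K : Vec n -> Prop.
Hypothesis K_compact : compact_for (@distV n) K.
Hypothesis K_central : forall a, K a -> exists k, centralizer L k /\ k a = x0.

Lemma dist_orbit_central k a b l x : centralizer L k -> k a = x0 -> L l ->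
  distV (l x0) (k b) <=
  lip_const k * (orbit_lip (distV (l x0) x0) * distV a x + distV (l x) b).
Proof.
move=> [[kA _] k_comm] ka Ll.
have lx0 : l x0 = k (l a) by rewrite k_comm // ka.
rewrite {1}lx0.
apply: Rle_trans (affine_lip kA _ _) _; apply: Rmult_le_compat_l (lip_const_ge0 k) _.
apply: Rle_trans (distV_triangle _ (l x) _) _; apply: Rplus_le_compat_r.
exact: mem_lip.
Qed.

Lemma orbit_bound_near k a l x r : centralizer L k -> k a = x0 -> L l -> 0 <= r ->
  lip_const k * INR n * (hlip + 1) / rho * r <= / 2 -> distV a x <= r ->
  distV (l x0) x0 <= 2 * lip_const k * (INR n * r + distV (l x) a).
Proof.
move=> kc ka Ll r_ge0 r_small ax.
have := dist_orbit_central a x kc ka Ll; rewrite ka.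
set D := distV (l x0) x0; set lam := lip_const k.
have D_ge0 : 0 <= D by exact: distV_ge0.
have lam_ge0 : 0 <= lam by exact: lip_const_ge0.
have lip_ax : orbit_lip D * distV a x <= INR n * (hlip + 1) / rho * r * D + INR n * r.
  apply: Rle_trans (Rmult_le_compat_l _ _ _ (orbit_lip_ge0 D_ge0) ax) _.
  by apply: Req_le; rewrite /orbit_lip; field; lra.
(* [D] occurs on both sides; the smallness of [r] absorbs half of it. *)
have := Rmult_le_compat_l _ _ _ lam_ge0 lip_ax.
have := Rmult_le_compat_r _ _ _ D_ge0 r_small.
rewrite -/lam; nra.
Qed.

Lemma orbit_bounded : exists R0, 0 <= R0 /\
  forall l x, L l -> K x -> K (l x) -> distV (l x0) x0 <= R0.
Proof.
have [M HM] := compact_bounded (@distV_refl n) (@distV_triangle n) x0 K_compact.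
have /(compact_cover_balls (@distV_refl n) (@distV_triangle n) K_compact) [s [Hs cover]] :
    forall a, K a -> exists r, 0 < r /\ exists C, forall l x, L l -> K x -> K (l x) ->
      distV a x < r -> distV (l x0) x0 <= C.
  move=> a Ka; have [k [kc ka]] := K_central Ka.
  pose A := lip_const k * INR n * (hlip + 1) / rho.
  have A_ge0 : 0 <= A.
    apply: Rdiv_ge0 rho_gt0; have := lip_const_ge0 k; have := pos_INR n; have := hlip_ge0.
    by move=> *; apply: Rmult_le_pos; [apply: Rmult_le_pos | lra].
  have r_gt0 : 0 < / (2 * (A + 1)) by apply: Rinv_0_lt_compat; lra.
  exists (/ (2 * (A + 1))); split => //.
  exists (2 * lip_const k * (INR n * / (2 * (A + 1)) + 2 * M)) => l x Ll Kx Klx ax.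
  apply: Rle_trans (orbit_bound_near kc ka Ll (Rlt_le _ _ r_gt0) _ (Rlt_le _ _ ax)) _.
    rewrite -/A (_ : A * / (2 * (A + 1)) = / 2 - / (2 * (A + 1))); first lra.
    by field; lra.
  apply: Rmult_le_compat_l; first by have := lip_const_ge0 k; lra.
  apply: Rplus_le_compat_l; apply: Rle_trans (distV_triangle _ x0 _) _.
  by have := HM _ Klx; have := HM _ Ka; rewrite (distV_sym (l x)); lra.
have [lC HlC] := list_choice (fun p sp => (Hs p sp).2).
have [R0 HR0] := list_upper_bound lC id.
exists (Rmax 0 R0); split; first exact: Rmax_l.
move=> l x Ll Kx Klx; have [p [sp px]] := cover x Kx; have [C [lCC HC]] := HlC p sp.
exact: Rle_trans (HC l x Ll Kx Klx px) (Rle_trans _ _ _ (HR0 C lCC) (Rmax_r _ _)).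
Qed.

Definition near a b eta l x :=
  [/\ L l, K x, K (l x), distV a x < eta & distV b (l x) < eta].

Definition approachable a b := forall eta, 0 < eta -> exists l x, near a b eta l x.

Lemma near_inv a b eta l x : near a b eta l x ->
  exists l', [/\ cancel l l', cancel l' l & near b a eta l' (l x)].
Proof.
case=> Ll Kx Klx ax blx; have [l' lK l'K] := L_bijective Ll.
by exists l'; split => //; split; rewrite ?lK //; exact: L_inv Ll lK l'K.
Qed.

Lemma approachable_sym a b : approachable a b -> approachable b a.
Proof.
move=> ab eta eta_gt0; have [l [x /near_inv [l' [_ _ nr']]]] := ab eta eta_gt0.
by exists l', (l x).
Qed.

Section Bounded.
Variable R0 : R.
Hypothesis R0_ge0 : 0 <= R0.
Hypothesis orbit_le : forall l x, L l -> K x -> K (l x) -> distV (l x0) x0 <= R0.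

Lemma near_lip a b eta l x u v : near a b eta l x ->
  distV (l u) (l v) <= orbit_lip R0 * distV u v.
Proof.
case=> Ll Kx Klx _ _; apply: Rle_trans (mem_lip u v Ll) _.
apply: Rmult_le_compat_r (distV_ge0 _ _) (orbit_lip_le (distV_ge0 _ _) _).
exact: orbit_le Ll Kx Klx.
Qed.

Lemma near_central k a b eta l x : centralizer L k -> k a = x0 -> near a b eta l x ->
  distV (l x0) (k b) <= lip_const k * (orbit_lip R0 + 1) * eta.
Proof.
move=> kc ka [Ll Kx Klx ax blx].
apply: Rle_trans (dist_orbit_central b x kc ka Ll) _.
rewrite Rmult_assoc; apply: Rmult_le_compat_l (lip_const_ge0 k) _.
rewrite Rmult_plus_distr_r Rmult_1_l (distV_sym (l x) b).
apply: Rplus_le_compat; last lra.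
have D_ge0 := distV_ge0 (l x0) x0.
apply: Rmult_le_compat (orbit_lip_ge0 D_ge0) (distV_ge0 _ _) _ (Rlt_le _ _ ax).
exact: orbit_lip_le D_ge0 (orbit_le Ll Kx Klx).
Qed.

Lemma central_const_ge0 (k : Vec n -> Vec n) : 0 <= lip_const k * (orbit_lip R0 + 1).
Proof.
by apply: Rmult_le_pos (lip_const_ge0 k) _; have := orbit_lip_ge0 R0_ge0; lra.
Qed.

Lemma approachable_param_eq a b ka : centralizer L ka -> ka a = x0 ->
  approachable a b -> param (ka b) a = b.
Proof.
move=> kac ka_a ab.
have c_ge1 := param_cont_const_ge1 (distV_ge0 a x0).
have OL_ge0 := orbit_lip_ge0 R0_ge0; have Ck_ge0 := central_const_ge0 ka.
apply: (@eq_of_scaled_bound _ _ _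
  (param_cont_const (distV a x0) * (lip_const ka * (orbit_lip R0 + 1)) + orbit_lip R0 + 1)).
  by have := Rmult_le_pos _ _ (Rle_trans _ _ _ Rle_0_1 c_ge1) Ck_ge0; lra.
move=> eta eta_gt0; have [l [x nr]] := ab eta eta_gt0; case: (nr) => Ll _ _ ax blx.
have param_l_a : distV (param (ka b) a) (l a) <=
          param_cont_const (distV a x0) * (lip_const ka * (orbit_lip R0 + 1) * eta).
  apply: Rle_trans (param_mem_distV _ _ Ll) _; rewrite (distV_sym (ka b)).
  apply: Rmult_le_compat_l; first lra.
  exact: near_central kac ka_a nr.
have l_a_x : distV (l a) (l x) <= orbit_lip R0 * eta.
  apply: Rle_trans (near_lip a x nr) _.
  exact: Rmult_le_compat_l OL_ge0 (Rlt_le _ _ ax).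
apply: Rle_trans (distV_triangle _ (l a) _) _.
apply: Rle_trans (Rplus_le_compat_l _ _ _ (distV_triangle _ (l x) _)) _.
by rewrite (distV_sym (l x)); nra.
Qed.

Lemma approachable_param_cancel a b ka kb :
  centralizer L ka -> ka a = x0 -> centralizer L kb -> kb b = x0 ->
  approachable a b -> cancel (param (kb a)) (param (ka b)).
Proof.
move=> kac ka_a kbc kb_b ab u; set v := param (kb a) u.
have c_ge1 w : 1 <= param_cont_const (distV w x0).
  exact: param_cont_const_ge1 (distV_ge0 _ _).
have OL_ge0 := orbit_lip_ge0 R0_ge0.
have Cka_ge0 := central_const_ge0 ka; have Ckb_ge0 := central_const_ge0 kb.
apply: (@eq_of_scaled_bound _ _ _
  (param_cont_const (distV v x0) * (lip_const ka * (orbit_lip R0 + 1)) +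
   orbit_lip R0 * (param_cont_const (distV u x0) * (lip_const kb * (orbit_lip R0 + 1))))).
  have c_ge0 w : 0 <= param_cont_const (distV w x0) by have := c_ge1 w; lra.
  apply: Rplus_le_le_0_compat; first exact: Rmult_le_pos.
  by apply: Rmult_le_pos => //; apply: Rmult_le_pos.
move=> eta eta_gt0; have [l [x nr]] := ab eta eta_gt0.
have [l' [lK l'K nr']] := near_inv nr; case: (nr) => Ll _ _ _ _.
(* write [u] as [l (l' u)], with [l], [l'] close to [param (ka b)], [param (kb a)] *)
rewrite -{1}(l'K u).
have param_l_v : distV (param (ka b) v) (l v) <=
          param_cont_const (distV v x0) * (lip_const ka * (orbit_lip R0 + 1) * eta).
  apply: Rle_trans (param_mem_distV _ _ Ll) _; rewrite (distV_sym (ka b)).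
  apply: Rmult_le_compat_l; first by have := c_ge1 v; lra.
  exact: near_central kac ka_a nr.
have v_l'u : distV v (l' u) <=
          param_cont_const (distV u x0) * (lip_const kb * (orbit_lip R0 + 1) * eta).
  case: (nr') => Ll' _ _ _ _.
  apply: Rle_trans (param_mem_distV _ _ Ll') _; rewrite (distV_sym (kb a)).
  apply: Rmult_le_compat_l; first by have := c_ge1 u; lra.
  exact: near_central kbc kb_b nr'.
apply: Rle_trans (distV_triangle _ (l v) _) _.
have := Rle_trans _ _ _ (near_lip v (l' u) nr) (Rmult_le_compat_l _ _ _ OL_ge0 v_l'u).
nra.
Qed.

Lemma approachable_limit a b : K a -> K b -> approachable a b ->
  exists f, (L f /\ exists x, K x /\ K (f x)) /\
    exists C, 0 <= C /\ forall eta l x, near a b eta l x -> distAff f l <= C * eta.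
Proof.
move=> Ka Kb ab.
have [ka [kac ka_a]] := K_central Ka; have [kb [kbc kb_b]] := K_central Kb.
pose C := param_cont_const (1 + distV (@vzero n) x0) * (lip_const ka * (orbit_lip R0 + 1)).
have C_ge0 : 0 <= C.
  apply: Rmult_le_pos (central_const_ge0 ka).
  apply: Rle_trans Rle_0_1 (param_cont_const_ge1 _).
  by have := distV_ge0 (@vzero n) x0; lra.
have approx eta l x : near a b eta l x -> distAff (param (ka b)) l <= C * eta.
  move=> nr; case: (nr) => Ll _ _ _ _.
  apply: Rle_trans (param_mem_distAff _ Ll) _; rewrite /C Rmult_assoc (distV_sym (ka b)).
  apply: Rmult_le_compat_l; last exact: near_central kac ka_a nr.
  apply: Rle_trans Rle_0_1 (param_cont_const_ge1 _).
  by have := distV_ge0 (@vzero n) x0; lra.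
exists (param (ka b)); split; last by exists C.
split; last by exists a; rewrite (approachable_param_eq kac ka_a ab).
apply: L_closed.
  split; first exact: param_affine.
  exists (param (kb a)).
    exact: approachable_param_cancel kbc kb_b kac ka_a (approachable_sym ab).
  exact: approachable_param_cancel kac ka_a kbc kb_b ab.
move=> eps eps_gt0; have [eta [eta_gt0 Ceta]] := exists_scale C_ge0 eps_gt0.
have [l [x nr]] := ab eta eta_gt0.
by exists l; split; [case: nr | exact: Rle_lt_trans (approx _ _ _ nr) Ceta].
Qed.

End Bounded.

Lemma returning_compact :
  compact_for (@distAff n) (fun l => L l /\ exists x, K x /\ K (l x)).
Proof.
have [R0 [R0_ge0 orbit_le]] := orbit_bounded.
move=> I O O_open cover.
have KK := compact_prod (@distV_refl n) (@distV_refl n)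
  (@distV_triangle n) (@distV_triangle n) K_compact K_compact.
have /(compact_cover_balls (dist_prod_refl (@distV_refl n) (@distV_refl n))
    (dist_prod_triangle (@distV_triangle n) (@distV_triangle n)) KK) [s [Hs coverKK]] :
    forall p, K p.1 /\ K p.2 -> exists r, 0 < r /\ exists li : list I,
      forall l x, near p.1 p.2 r l x -> exists i, In i li /\ O i l.
  move=> [a b] [/= Ka Kb].
  case: (classic (approachable a b)) => [ab | not_ab]; last first.
    have [eta not_eta] := not_all_ex_not _ _ not_ab.
    have [eta_gt0 no_near] := imply_to_and _ _ not_eta.
    by exists eta; split => //; exists nil => l x nr; exfalso; apply: no_near; exists l, x.
  have [f [Sf [C [C_ge0 approx]]]] := approachable_limit R0_ge0 orbit_le Ka Kb ab.
  have [i Oi] := cover f Sf; have [e [e_gt0 ball_f]] := O_open i f Oi.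
  have [eta [eta_gt0 Ceta]] := exists_scale C_ge0 e_gt0.
  exists eta; split => //; exists (i :: nil) => l x nr; exists i; split; first by left.
  exact: ball_f (Rle_lt_trans _ _ _ (approx _ _ _ nr) Ceta).
have [lli Hlli] := list_choice (fun p sp => (Hs p sp).2).
exists (concat lli) => l [Ll [x [Kx Klx]]].
have [p [sp dp]] := coverKK (x, l x) (conj Kx Klx).
have [li [llii Hli]] := Hlli p sp.
have [i [lii Oi]] : exists i, In i li /\ O i l.
  apply: (Hli l x); rewrite /dist_prod /= in dp.
  by split => //; apply: Rle_lt_trans dp; [apply: Rmax_l | apply: Rmax_r].
by exists i; split => //; apply/in_concat; exists li.
Qed.

End ClosedToProper.

End Parametrization.

Lemma central_frame n (L : (Vec n -> Vec n) -> Prop) (U : Vec n -> Prop) x0 :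
  open_for (@distV n) U -> U x0 -> acts_transitively (centralizer L) U ->
  exists rho (h : 'I_n -> Vec n -> Vec n), [/\ 0 < rho,
    forall j, centralizer L (h j) & forall j i, h j x0 i = x0 i + rho * ebasis j i].
Proof.
move=> U_open Ux0 [_ transitive].
have [r [r_gt0 ball_x0]] := U_open x0 Ux0.
pose q j : Vec n := fun i => x0 i + r / 2 * ebasis j i.
have [h Hh] : exists h : 'I_n -> Vec n -> Vec n,
    forall j, centralizer L (h j) /\ h j x0 = q j.
  apply: (choice (fun j g => centralizer L g /\ g x0 = q j)) => j.
  apply: transitive => //; apply: ball_x0.
  apply: Rle_lt_trans (_ : distV x0 (q j) <= r / 2) _; last lra.
  apply: distV_le => [|i]; first lra.
  rewrite /q (_ : forall a b, a - (a + b) = - b) => [|a b]; last ring.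
  rewrite Rabs_Ropp Rabs_mult Rabs_pos_eq; last lra.
  by rewrite /ebasis; case: (i == j); rewrite ?Rabs_R1 ?Rabs_R0; lra.
by exists (r / 2), h; split => [|j|j i]; [lra | exact: (Hh j).1 | rewrite (Hh j).2].
Qed.

Theorem proposition7p3 (n : nat) (L : (Vec n -> Vec n) -> Prop)
  (U : Vec n -> Prop) :
  aff_subgroup L ->
  open_for (@distV n) U ->
  (exists x, U x) ->
  acts_transitively (centralizer L) U ->
  preserves L U ->
  (proper_action L U <-> closed_in_Aff L).
Proof.
move=> [L_Aff [_ [_ L_inv]]] U_open [u Uu] transitive L_preserves.
have L_affine l : L l -> is_affine_map l by move=> /L_Aff [].
split=> [L_proper | L_closed K KU K_compact].
  exact: closed_of_proper L_affine L_preserves L_proper u U_open Uu.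
have [rho [h [rho_gt0 h_central h_u]]] := central_frame U_open Uu transitive.
apply: (returning_compact L_affine rho_gt0 h_central h_u _ L_inv L_closed K_compact).
  by move=> l /L_Aff [].
by move=> a Ka; apply: transitive.2 => //; exact: KU.
Qed.
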